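(* Let $R$ be a commutative noetherian ring. The subcategory of finitely weakly Laskerian $R$-modules satisfies the condition $C_{\mathfrak a}$ for every ideal $\mathfrak a$ of $R$.
   Context: An $R$-module $M$ is finitely weakly Laskerian if $\mathrm{Ass}_R(M/K)$ is finite for every finitely generated submodule $K$ of $M$. A subcategory $\mathcal S$ of $R$-modules satisfies the condition $C_{\mathfrak a}$ if for every $R$-module $M$: whenever $\Gamma_{\mathfrak a}(M)=M$ and $(0:_M\mathfrak a)\in\mathcal S$, then $M\in\mathcal S$. *)

From HB Require Import structures.
From mathcomp Require Import all_boot all_order all_algebra.
From mathcomp Require Import boolp classical_sets cardinality.
Set Implicit Arguments. Unset Strict Implicit. Unset Printing Implicit Defensive.
Import GRing.Theory.
Local Open Scope classical_set_scope.
Local Open Scope ring_scope.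

Section Defs.
Variable R : comPzRingType.

Definition is_ideal (I : set R) : Prop :=
  I 0 /\ (forall x y, I x -> I y -> I (x + y)) /\ (forall r x, I x -> I (r * x)).

Definition prime_ideal (p : set R) : Prop :=
  is_ideal p /\ ~ p 1 /\ (forall x y, p (x * y) -> p x \/ p y).

Definition ideal_gen (A : set R) : set R :=
  [set r | forall I, is_ideal I -> A `<=` I -> I r].

Definition noetherian_ring : Prop :=
  forall I : set R, is_ideal I -> exists s : seq R, I = ideal_gen [set x | x \in s].

(* a^n : the ideal generated by all products of n elements of a (a^0 = R) *)
Definition ideal_pow (a : set R) (n : nat) : set R :=
  ideal_gen [set r | exists rs : seq R,
     size rs = n /\ (forall x, x \in rs -> a x) /\ r = \prod_(x <- rs) x].

Variable M : lmodType R.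

Definition is_submod (N : set M) : Prop :=
  N 0 /\ (forall x y, N x -> N y -> N (x + y)) /\ (forall (r : R) x, N x -> N (r *: x)).

Definition submod_gen (A : set M) : set M :=
  [set v | forall N, is_submod N -> A `<=` N -> N v].

Definition fg_submod (K : set M) : Prop :=
  exists s : seq M, K = submod_gen [set x | x \in s].

(* Ass_R(N/K) for submodules K <= N of M: primes p with p = (K :_R x),
   x in N \ K  (i.e. p = Ann_R of the nonzero class of x in N/K). *)
Definition Ass_quot (N K : set M) : set (set R) :=
  [set p | prime_ideal p /\
     exists x, N x /\ ~ K x /\ p = [set r | K (r *: x)]].

Definition Gamma (a : set R) : set M :=
  [set x | exists n, ideal_pow a n `<=` [set r | r *: x = 0]].

Definition colon0 (a : set R) : set M :=
  [set x | forall r, a r -> r *: x = 0].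

Definition fwl (N : set M) : Prop :=
  forall K : set M, is_submod K -> fg_submod K -> K `<=` N -> finite_set (Ass_quot N K).

End Defs.

(* A "subcategory" of R-modules, given as a predicate on modules presented as
   submodules N of some ambient module M (M itself is the case N = setT). *)
Definition module_class (R : comPzRingType) :=
  forall M : lmodType R, set M -> Prop.

Definition condition_C (R : comPzRingType) (S : module_class R) (a : set R) : Prop :=
  forall M : lmodType R,
    @Gamma R M a = [set: M] -> S M (@colon0 R M a) -> S M [set: M].

Definition fwl_class (R : comPzRingType) : module_class R := fun M N => @fwl R M N.

From mathcomp Require Import all_boot all_order all_algebra.
From mathcomp Require Import boolp classical_sets cardinality.
Set Implicit Arguments. Unset Strict Implicit. Unset Printing Implicit Defensive.
Import GRing.Theory.
Local Open Scope classical_set_scope.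
Local Open Scope ring_scope.

(* Write a = (c_1, ..., c_k) and peel off one generator at a time: it suffices
   that if N is c-torsion and (0 :_N c) is finitely weakly Laskerian, then so
   is N.  A finitely generated K <= N is killed by some c^m, and every prime of
   Ass(N/K) contains c, so Ass(N/K) <= Ass((0 :_N c^(m+1))/K).  The latter is
   finite by induction on m, splitting along J = K + (0 :_N c): Ass(J/K) lies
   in Ass((0 :_N c)/(K `&` (0 :_N c))), where K `&` (0 :_N c) is finitely
   generated since R is noetherian, and multiplication by c sends
   Ass((0 :_N c^(m+1))/J) into Ass((0 :_N c^m)/cK). *)

Section Ideals.
Variable R : comPzRingType.
Implicit Types (A I p : set R) (c : R).

Lemma sub_ideal_gen A : A `<=` ideal_gen A.
Proof. by move=> x Ax I _; apply. Qed.

Lemma ideal_gen_min A I : is_ideal I -> A `<=` I -> ideal_gen A `<=` I.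
Proof. by move=> HI AI x; apply. Qed.

Lemma ideal_pow_exp A c n : A c -> ideal_pow A n (c ^+ n).
Proof.
move=> Ac; apply: sub_ideal_gen; exists (nseq n c); split; first exact: size_nseq.
split; first by move=> y; rewrite mem_nseq => /andP[_ /eqP->].
by elim: n => [|n IHn]; rewrite ?big_nil ?expr0 // big_cons exprS IHn.
Qed.

Lemma prime_ideal_exp p c n : prime_ideal p -> p (c ^+ n) -> p c.
Proof.
case=> _ [p_1 p_mul]; elim: n => [|n IHn]; first by rewrite expr0 => /p_1.
by rewrite exprS => /p_mul[].
Qed.

End Ideals.

Section Submodules.
Variables (R : comPzRingType) (M : lmodType R).
Implicit Types (A B K L N P G : set M) (x : M) (c r : R).

Lemma submod0 N : is_submod N -> N 0.
Proof. by case. Qed.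

Lemma submodD N x y : is_submod N -> N x -> N y -> N (x + y).
Proof. by case=> _ [+ _]; apply. Qed.

Lemma submodZ N r x : is_submod N -> N x -> N (r *: x).
Proof. by case=> _ [_]; apply. Qed.

Lemma submodB N x y : is_submod N -> N x -> N y -> N (x - y).
Proof. by move=> HN Nx Ny; rewrite -scaleN1r; apply: submodD Nx (submodZ _ HN Ny). Qed.

Lemma submod_setT : is_submod [set: M].
Proof. by []. Qed.

Lemma submod_setI K L : is_submod K -> is_submod L -> is_submod (K `&` L).
Proof.
move=> HK HL; split; first by split; apply: submod0.
split=> [x y [Kx Lx] [Ky Ly] | r x [Kx Lx]]; split.
- exact: submodD HK Kx Ky.
- exact: submodD HL Lx Ly.
- exact: (submodZ r HK Kx).
- exact: (submodZ r HL Lx).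
Qed.

Lemma submod_add K L : is_submod K -> is_submod L ->
  is_submod [set k + l | k in K & l in L].
Proof.
move=> HK HL; split.
  by exists 0; [exact: submod0 | exists 0; [exact: submod0 | rewrite addr0]].
split=> [_ _ [k Kk [l Ll <-]] [k' Kk' [l' Ll' <-]] | r _ [k Kk [l Ll <-]]].
  by exists (k + k'); [exact: submodD | exists (l + l'); [exact: submodD | rewrite addrACA]].
by exists (r *: k); [exact: submodZ | exists (r *: l); [exact: submodZ | rewrite scalerDr]].
Qed.

Lemma submod_scale c K : is_submod K -> is_submod [set c *: k | k in K].
Proof.
move=> HK; split; first by exists 0; [exact: submod0 | rewrite scaler0].
split=> [_ _ [k Kk <-] [k' Kk' <-] | r _ [k Kk <-]].
  by exists (k + k'); [exact: submodD | rewrite scalerDr].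
by exists (r *: k); [exact: submodZ | rewrite !scalerA mulrC].
Qed.

Lemma submod_gen_submod A : is_submod (submod_gen A).
Proof.
split; first by move=> N [].
split=> [x y Ax Ay | r x Ax] N HN AN.
  exact: submodD HN (Ax N HN AN) (Ay N HN AN).
exact: (submodZ r HN (Ax N HN AN)).
Qed.

Lemma sub_submod_gen A : A `<=` submod_gen A.
Proof. by move=> x Ax N _; apply. Qed.

Lemma submod_gen_min A N : is_submod N -> A `<=` N -> submod_gen A `<=` N.
Proof. by move=> HN AN x; apply. Qed.

Lemma submod_gen_sub A B : A `<=` B -> submod_gen A `<=` submod_gen B.
Proof.
move=> AB; apply: submod_gen_min; first exact: submod_gen_submod.
exact: subset_trans AB (@sub_submod_gen B).
Qed.

Lemma ann_ideal x : is_ideal [set r | r *: x = 0].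
Proof.
split; first by rewrite /= scale0r.
by split=> [r s /= rx sx | r s /= sx]; rewrite ?scalerDl ?rx ?sx ?addr0 // -scalerA sx scaler0.
Qed.

Definition lift_ideal P G x : set R := [set r | exists2 w, P w & G (w - r *: x)].

Lemma lift_ideal_is_ideal P G x : is_submod P -> is_submod G -> is_ideal (lift_ideal P G x).
Proof.
move=> HP HG; split.
  by exists 0; [exact: submod0 | rewrite scale0r subr0; exact: submod0].
split=> [r s [v Pv Gv] [w Pw Gw] | s r [v Pv Gv]].
  exists (v + w); first exact: submodD.
  by rewrite scalerDl opprD addrACA; exact: submodD.
exists (s *: v); first exact: (submodZ s HP Pv).
by rewrite -scalerA -scalerBr; exact: (submodZ s HG Gv).
Qed.

Lemma submod_gen_cons x (s : seq M) y : submod_gen [set z | z \in x :: s] y ->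
  exists r, submod_gen [set z | z \in s] (y - r *: x).
Proof.
pose G := submod_gen [set z | z \in s].
have HG : is_submod G by exact: submod_gen_submod.
have lift_submod : is_submod [set v | exists r, G (v - r *: x)].
  split; first by exists 0; rewrite scale0r subr0; exact: submod0.
  split=> [u v [r Gu] [r' Gv] | t v [r Gv]].
    by exists (r + r'); rewrite scalerDl opprD addrACA; exact: submodD HG Gu Gv.
  by exists (t * r); rewrite -scalerA -scalerBr; exact: (submodZ t HG Gv).
suff gens_lift : [set z | z \in x :: s] `<=` [set v | exists r, G (v - r *: x)].
  by move=> sy; exact: (submod_gen_min lift_submod gens_lift sy).
move=> z /=; rewrite in_cons => /orP[/eqP-> | sz].
  by exists 1; rewrite scale1r subrr; exact: submod0.
by exists 0; rewrite scale0r subr0; exact: sub_submod_gen.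
Qed.

Lemma lift_ideal_gen P G x (rs : seq R) : is_submod G ->
  lift_ideal P G x = ideal_gen [set r | r \in rs] ->
  exists2 ys : seq M, [set z | z \in ys] `<=` P &
    lift_ideal P G x `<=` lift_ideal (submod_gen [set z | z \in ys]) G x.
Proof.
move=> HG I_rs.
have rs_I : [set r | r \in rs] `<=` lift_ideal P G x by rewrite I_rs; exact: sub_ideal_gen.
have /choice[f f_lift] : forall r, exists w, lift_ideal P G x r -> P w /\ G (w - r *: x).
  move=> r; case: (pselect (lift_ideal P G x r)) => [[w Pw Gw] | nI]; first by exists w.
  by exists 0 => /nI.
exists (map f rs); first by move=> _ /mapP[r /rs_I/f_lift[Pfr _] ->].
rewrite [X in X `<=` _]I_rs; apply: ideal_gen_min.
  exact: lift_ideal_is_ideal (submod_gen_submod _) HG.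
move=> r rs_r; have [_ Gfr] := f_lift r (rs_I _ rs_r).
by exists (f r) => //; apply: sub_submod_gen; exact: map_f.
Qed.

Lemma fg_submod_scale c K : fg_submod K -> fg_submod [set c *: k | k in K].
Proof.
case=> s ->; exists (map (fun v => c *: v) s).
pose S := submod_gen [set z | z \in map (fun v => c *: v) s].
have HS : is_submod S := submod_gen_submod _.
apply/seteqP; split=> [_ [k sk <-] | ].
  have HSc : is_submod [set v | S (c *: v)].
    split; first by rewrite /= scaler0; exact: submod0.
    split=> [u v /= Su Sv | r v /= Sv]; first by rewrite scalerDr; exact: submodD HS Su Sv.
    by rewrite scalerA mulrC -scalerA; exact: (submodZ r HS Sv).
  by apply: submod_gen_min HSc _ k sk => v /= sv; apply: sub_submod_gen; exact: map_f.
apply: submod_gen_min (submod_scale c (submod_gen_submod _)) _ => _ /mapP[v sv ->].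
by exists v => //; exact: sub_submod_gen.
Qed.

End Submodules.

Section Colon.
Variables (R : comPzRingType) (M : lmodType R).
Implicit Types (K N : set M) (c : R) (cs : seq R).

Definition colon_pow N c m := [set x | N x /\ c ^+ m *: x = 0].

Definition colon_seq N cs := [set x | N x /\ forall c, c \in cs -> c *: x = 0].

Definition torsion_by N c := forall x, N x -> exists n, c ^+ n *: x = 0.

Lemma submod_colon_pow N c m : is_submod N -> is_submod (colon_pow N c m).
Proof.
move=> HN; split; first by split; [exact: submod0 | rewrite scaler0].
split=> [x y [Nx cx] [Ny cy] | r x [Nx cx]].
  by split; [exact: submodD HN Nx Ny | rewrite scalerDr cx cy addr0].
by split; [exact: (submodZ r HN Nx) | rewrite scalerA mulrC -scalerA cx scaler0].
Qed.

Lemma submod_colon_seq N cs : is_submod N -> is_submod (colon_seq N cs).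
Proof.
move=> HN; split; first by split=> [|c _]; [exact: submod0 | rewrite scaler0].
split=> [x y [Nx cx] [Ny cy] | r x [Nx cx]].
  by split=> [|c cs_c]; [exact: submodD HN Nx Ny | rewrite scalerDr cx // cy // addr0].
split=> [|c cs_c]; first exact: (submodZ r HN Nx).
by rewrite scalerA mulrC -scalerA cx // scaler0.
Qed.

Lemma colon_seq_cons N c cs : colon_seq N (c :: cs) = colon_pow (colon_seq N cs) c 1.
Proof.
apply/seteqP; split=> x /= [Nx cx].
  by split; [split=> // d cs_d; apply: cx; rewrite in_cons cs_d orbT | rewrite expr1 cx ?mem_head].
case: Nx => Nx csx; split=> // d; rewrite in_cons => /orP[/eqP-> | /csx //].
by rewrite -[c]expr1.
Qed.

Lemma colon_seq_setT cs : colon_seq [set: M] cs = colon0 (ideal_gen [set c | c \in cs]).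
Proof.
apply/seteqP; split=> x /=; last by move=> ax; split=> // c cs_c; apply: ax; apply: sub_ideal_gen.
by case=> _ csx r; apply: ideal_gen_min (ann_ideal x) _ r => c /csx.
Qed.

Lemma colon_pow_sub N c n m : (n <= m)%N -> colon_pow N c n `<=` colon_pow N c m.
Proof. by move=> /subnK<- x [Nx cx]; split; rewrite // exprD -scalerA cx scaler0. Qed.

Lemma fg_submod_colon_pow N c K : is_submod N -> torsion_by N c -> fg_submod K -> K `<=` N ->
  exists m, K `<=` colon_pow N c m.
Proof.
move=> HN Ntors [s ->] /(subset_trans (@sub_submod_gen _ _ _)).
elim: s => [|v s IHs] sN.
  by exists 0%N; apply: submod_gen_min (submod_colon_pow _ _ HN) _ => u; rewrite /= in_nil.
have [|m s_m] := IHs; first by move=> u s_u; apply: sN; rewrite /= in_cons s_u orbT.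
have [n v_n] := Ntors v (sN v (mem_head v s)).
exists (maxn n m); apply: submod_gen_min (submod_colon_pow _ _ HN) _ => u /=.
rewrite in_cons => /orP[/eqP-> | s_u].
  by apply: colon_pow_sub (leq_maxl n m) _ _; split=> //; apply: sN; exact: mem_head.
by apply: colon_pow_sub (leq_maxr n m) _ _; apply: s_m; exact: sub_submod_gen.
Qed.

End Colon.

Section AssQuot.
Variables (R : comPzRingType) (M : lmodType R).
Implicit Types (J K L N : set M) (c : R).

Lemma Ass_quot_split K J L : is_submod K -> K `<=` J ->
  Ass_quot L K `<=` Ass_quot J K `|` Ass_quot L J.
Proof.
move=> HK KJ q [Pq [y [Ly [nKy q_eq]]]]; subst q.
case: (pselect (exists2 r, J (r *: y) & ~ K (r *: y))) => [[r Jry nKry] | noJ].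
  left; split=> //; exists (r *: y); do 2!split=> //.
  apply/seteqP; split=> t /= Kty.
    by rewrite scalerA mulrC -scalerA; exact: (submodZ r HK Kty).
  by move: Kty; rewrite scalerA => /Pq.2.2[].
right; split=> //; exists y; split=> //; split.
  by move=> Jy; apply: noJ; exists 1; rewrite scale1r.
apply/seteqP; split=> t /= Kty; first exact: KJ.
by apply: contrapT => nKty; apply: noJ; exists t.
Qed.

Lemma Ass_quot_add K L : is_submod K -> is_submod L ->
  Ass_quot [set k + l | k in K & l in L] K `<=` Ass_quot L (K `&` L).
Proof.
move=> HK HL q [Pq [_ [[k Kk [l Ll <-]] [nKkl q_eq]]]]; subst q.
split=> //; exists l; split=> //; split.
  by case=> Kl _; apply: nKkl; exact: submodD HK Kk Kl.
apply/seteqP; split=> t /=; rewrite scalerDr.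
  move=> Kt; split; last exact: (submodZ t HL Ll).
  have -> : t *: l = t *: k + t *: l - t *: k by rewrite addrC addKr.
  exact: submodB HK Kt (submodZ t HK Kk).
by case=> Ktl _; exact: submodD HK (submodZ t HK Kk) Ktl.
Qed.

Lemma Ass_quot_colon_pow0 N c K : is_submod K -> Ass_quot (colon_pow N c 0) K = set0.
Proof.
move=> HK; apply/seteqP; split=> [q [_ [x [[_ cx] [nKx _]]]] | ]; last exact: sub0set.
by apply: nKx; move: cx; rewrite expr0 scale1r => ->; exact: submod0.
Qed.

Lemma Ass_quot_colon_pow_succ N c m K : is_submod N -> is_submod K -> K `<=` N ->
  Ass_quot (colon_pow N c m.+1) [set k + l | k in K & l in colon_pow N c 1]
  `<=` Ass_quot (colon_pow N c m) [set c *: k | k in K].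
Proof.
move=> HN HK KN q [Pq [x [[Nx cx] [nJx q_eq]]]]; subst q.
split=> //; exists (c *: x); split.
  by split; [exact: (submodZ c HN Nx) | rewrite scalerA -exprSr].
split.
  case=> k Kk ck_cx; apply: nJx; exists k => //; exists (x - k); last by rewrite addrC subrK.
  by split; [exact: submodB HN Nx (KN k Kk) | rewrite expr1 scalerBr ck_cx subrr].
apply/seteqP; split=> t /=.
  case=> k Kk [l [Nl cl] kl_tx]; exists k => //.
  by rewrite scalerA mulrC -scalerA -kl_tx scalerDr -[c]expr1 cl addr0.
case=> k Kk ck_tcx; exists k => //; exists (t *: x - k); last by rewrite addrC subrK.
split; first exact: submodB HN (submodZ t HN Nx) (KN k Kk).
by rewrite expr1 scalerBr scalerA mulrC -scalerA -ck_tcx subrr.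
Qed.

Lemma Ass_quot_torsion_by N c m K : is_submod K -> torsion_by N c ->
  K `<=` colon_pow N c m -> Ass_quot N K `<=` Ass_quot (colon_pow N c m.+1) K.
Proof.
move=> HK Ntors KNm q [Pq [x [Nx [nKx q_eq]]]].
split=> //; exists x; split; last by split.
have [n cx] := Ntors x Nx.
have /(prime_ideal_exp Pq) : q (c ^+ n) by rewrite q_eq /= cx; exact: submod0.
by rewrite q_eq => /KNm[_ ccx]; split; rewrite // exprSr -scalerA.
Qed.

End AssQuot.

Section Noetherian.
Variables (R : comPzRingType) (M : lmodType R).
Hypothesis noeth : noetherian_ring R.
Implicit Types (K N : set M) (s : seq M).

Lemma fg_submod_sub s N : is_submod N -> N `<=` submod_gen [set x | x \in s] -> fg_submod N.
Proof.
elim: s N => [|x s IHs] N HN Ns.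
  exists [::]; apply/seteqP; split => //.
  by apply: submod_gen_min => // y /=; rewrite in_nil.
pose G := submod_gen [set z | z \in s].
have HG : is_submod G := submod_gen_submod _.
(* N is generated by lifts of generators of its ideal of x-coefficients mod G,
   together with generators of N `&` G. *)
have [t NG_t] := IHs _ (submod_setI HN HG) (@subIsetr _ _ _).
have [rs I_rs] := noeth (lift_ideal_is_ideal x HN HG).
have [ys ys_N I_lift] := lift_ideal_gen HG I_rs.
exists (ys ++ t); apply/seteqP; split=> [y Ny | ].
  have [r Gyr] := submod_gen_cons (Ns _ Ny).
  have [w ys_w Gwr] := I_lift r (ex_intro2 _ _ y Ny Gyr).
  have Nw : N w := submod_gen_min HN ys_N ys_w.
  have NG_yw : (N `&` G) (y - w).
    split; first exact: submodB HN Ny Nw.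
    have -> : y - w = (y - r *: x) - (w - r *: x) by rewrite opprB addrA subrK.
    exact: submodB HG Gyr Gwr.
  have -> : y = w + (y - w) by rewrite addrC subrK.
  apply: submodD (submod_gen_submod _) _ _.
    by apply: submod_gen_sub ys_w => z /= ys_z; rewrite mem_cat ys_z.
  by move: NG_yw; rewrite NG_t; apply: submod_gen_sub => z /= t_z; rewrite mem_cat t_z orbT.
apply: submod_gen_min HN _ => z /=; rewrite mem_cat => /orP[/ys_N // | t_z].
by have [] : (N `&` G) z by rewrite NG_t; exact: sub_submod_gen.
Qed.

Lemma fg_submod_setI K L : is_submod K -> is_submod L -> fg_submod K -> fg_submod (K `&` L).
Proof.
move=> HK HL [s Ks]; apply: (fg_submod_sub (s := s)) (submod_setI HK HL) _.
by rewrite -Ks => x [].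
Qed.

Lemma fwl_colon_pow N c : is_submod N -> fwl (colon_pow N c 1) -> forall m, fwl (colon_pow N c m).
Proof.
move=> HN fwl1; elim=> [|m IHm] K HK fgK KNm.
  by rewrite Ass_quot_colon_pow0 //; exact: finite_set0.
have HN1 := submod_colon_pow c 1 HN.
have KN : K `<=` N by move=> x /KNm[].
have KJ : K `<=` [set k + l | k in K & l in colon_pow N c 1].
  by move=> k Kk; exists k => //; exists 0; [exact: submod0 | rewrite addr0].
apply: sub_finite_set (Ass_quot_split HK KJ) _; rewrite finite_setU; split.
  apply: sub_finite_set (Ass_quot_add HK HN1) _.
  exact: fwl1 (submod_setI HK HN1) (fg_submod_setI HK HN1 fgK) (@subIsetr _ _ _).
apply: sub_finite_set (Ass_quot_colon_pow_succ HN HK KN) _.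
apply: IHm (submod_scale c HK) (fg_submod_scale c fgK) _ => _ [k Kk <-].
have [Nk ck] := KNm k Kk.
by split; [exact: (submodZ c HN Nk) | rewrite scalerA -exprSr].
Qed.

Lemma fwl_torsion_by N c : is_submod N -> torsion_by N c -> fwl (colon_pow N c 1) -> fwl N.
Proof.
move=> HN Ntors fwl1 K HK fgK KN.
have [m KNm] := fg_submod_colon_pow HN Ntors fgK KN.
apply: sub_finite_set (Ass_quot_torsion_by HK Ntors KNm) _.
apply: fwl_colon_pow => //; exact: subset_trans KNm (colon_pow_sub (leqnSn m)).
Qed.

Lemma fwl_colon_seq cs N : is_submod N -> (forall c, c \in cs -> torsion_by N c) ->
  fwl (colon_seq N cs) -> fwl N.
Proof.
elim: cs N => [|c cs IHcs] N HN tors.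
  by have -> : colon_seq N [::] = N by apply/seteqP; split=> [x [] | x Nx].
move=> fwl_ccs; apply: IHcs => // [d cs_d | ]; first by apply: tors; rewrite in_cons cs_d orbT.
apply: (fwl_torsion_by (c := c)) (submod_colon_seq cs HN) _ _; last by rewrite -colon_seq_cons.
by move=> x [Nx _]; apply: tors Nx; exact: mem_head.
Qed.

End Noetherian.

Theorem proposition3p14 (R : comPzRingType) :
  noetherian_ring R ->
  forall a : set R, is_ideal a -> condition_C (@fwl_class R) a.
Proof.
move=> noeth a a_ideal M Gamma_a; rewrite /fwl_class => fwl_colon0.
have [cs a_cs] := noeth _ a_ideal.
apply: (fwl_colon_seq noeth (submod_setT M) (cs := cs)); last by rewrite colon_seq_setT -a_cs.
move=> c cs_c x _; have [n an_x] : Gamma a x by rewrite Gamma_a.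
exists n; apply: an_x; apply: ideal_pow_exp.
by rewrite a_cs; exact: sub_ideal_gen.
Qed.
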